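(* Let $v\in C(S^1,(0,\infty))$ be separable in $S^1$ and suppose $v((\cos\alpha,\sin\alpha))=v((\cos(\alpha+\pi),\sin(\alpha+\pi)))$ for every $\alpha\in[0,2\pi)$. Then $v$ is constant on $S^1$.
   Context: $S^1\subset\mathbb{R}^2$ is the unit circle. For $\alpha\in\mathbb{R}$, $S^1_\alpha=\{(\cos(\alpha+\theta),\sin(\alpha+\theta)):\theta\in(0,\pi)\}$, and for $x\in S^1$, $l_\alpha(x)$ denotes the reflection of $x$ across the line through the origin with direction $(\cos\alpha,\sin\alpha)$. A function $v\in C(S^1,\mathbb{R})$ is called separable in $S^1$ if for every $\alpha\in[0,2\pi)$, either $v(l_\alpha(x))\ge v(x)$ for all $x\in S^1_\alpha$, or $v(l_\alpha(x))\le v(x)$ for all $x\in S^1_\alpha$. *)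

From Stdlib Require Import Reals.
Open Scope R_scope.

Definition pt := (R * R)%type.

Definition on_S1 (p : pt) : Prop := fst p ^ 2 + snd p ^ 2 = 1.

Definition dist2 (p q : pt) : R :=
  sqrt ((fst p - fst q) ^ 2 + (snd p - snd q) ^ 2).

Definition cont_on_S1 (v : pt -> R) : Prop :=
  forall p, on_S1 p -> forall eps, 0 < eps ->
    exists delta, 0 < delta /\
      forall q, on_S1 q -> dist2 q p < delta -> Rabs (v q - v p) < eps.

Definition S1_half (alpha : R) (p : pt) : Prop :=
  exists theta, 0 < theta < PI /\
    p = (cos (alpha + theta), sin (alpha + theta)).

(* Reflection across the line through 0 with direction (cos a, sin a). *)
Definition refl (alpha : R) (p : pt) : pt :=
  let d := fst p * cos alpha + snd p * sin alpha in
  (2 * d * cos alpha - fst p, 2 * d * sin alpha - snd p).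

Definition separable_S1 (v : pt -> R) : Prop :=
  forall alpha, 0 <= alpha < 2 * PI ->
    (forall x, S1_half alpha x -> v (refl alpha x) >= v x) \/
    (forall x, S1_half alpha x -> v (refl alpha x) <= v x).

(* Separability forces opposite inequalities between [v] and its reflection at the
   angles [th] and [PI - th] of the half circle [S1_half a], since the antipodal
   symmetry maps one pair of points onto the other.  Hence [v] is symmetric under
   every reflection, and any two points of the circle are exchanged by one. *)

From Stdlib Require Import Reals Lra Psatz.
Open Scope R_scope.

Lemma on_S1_polar (x y : R) : x ^ 2 + y ^ 2 = 1 ->
  exists t, 0 <= t < 2 * PI /\ x = cos t /\ y = sin t.
Proof.
  intro Hxy.
  assert (Hx : -1 <= x <= 1) by nra.
  assert (Hsin : sqrt (1 - x²) = Rabs y).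
  { replace (1 - x²) with (Rsqr y) by (unfold Rsqr; nra). apply sqrt_Rsqr_abs. }
  pose proof (acos_bound x) as Hacos. pose proof PI_RGT_0.
  destruct (Rle_or_lt 0 y) as [Hy|Hy].
  - exists (acos x). split; [lra|]. split.
    + rewrite cos_acos; auto.
    + rewrite sin_acos, Hsin, Rabs_right; lra.
  - assert (Hpos : 0 < acos x).
    { destruct (proj1 Hacos) as [h|h]; auto.
      exfalso. assert (x = 1) by (rewrite <- (cos_acos x Hx), <- h; apply cos_0).
      subst. nra. }
    exists (2 * PI - acos x). split; [lra|]. split.
    + rewrite cos_minus, cos_2PI, sin_2PI, cos_acos; auto; ring.
    + rewrite sin_minus, cos_2PI, sin_2PI, sin_acos, Hsin, Rabs_left; auto; ring.
Qed.

Lemma cos_sin_principal (t : R) :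
  exists t0, 0 <= t0 < 2 * PI /\ cos t = cos t0 /\ sin t = sin t0.
Proof.
  apply on_S1_polar. pose proof (sin2_cos2 t). unfold Rsqr in *. nra.
Qed.

Lemma refl_cos_sin (a th : R) :
  refl a (cos (a + th), sin (a + th)) = (cos (a - th), sin (a - th)).
Proof.
  unfold refl; simpl. pose proof (sin2_cos2 a) as Hpyth. unfold Rsqr in Hpyth.
  f_equal.
  - assert (E : 2 * (cos (a + th) * cos a + sin (a + th) * sin a) * cos a - cos (a + th)
              - cos (a - th) = 2 * cos th * cos a * (sin a * sin a + cos a * cos a - 1)).
    { rewrite cos_plus, sin_plus, cos_minus. ring. }
    rewrite Hpyth in E. lra.
  - assert (E : 2 * (cos (a + th) * cos a + sin (a + th) * sin a) * sin a - sin (a + th)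
              - sin (a - th) = 2 * cos th * sin a * (sin a * sin a + cos a * cos a - 1)).
    { rewrite cos_plus, sin_plus, sin_minus. ring. }
    rewrite Hpyth in E. lra.
Qed.

Section SeparableAntipodal.

Variable v : pt -> R.
Hypothesis v_separable : separable_S1 v.
Hypothesis v_antipodal : forall alpha, 0 <= alpha < 2 * PI ->
  v (cos alpha, sin alpha) = v (cos (alpha + PI), sin (alpha + PI)).

Let F (t : R) : R := v (cos t, sin t).

Lemma F_addPI (t : R) : F (t + PI) = F t.
Proof.
  destruct (cos_sin_principal t) as [t0 [Ht0 [Ecos Esin]]].
  unfold F.
  assert (Ecos' : cos (t + PI) = cos (t0 + PI)) by (rewrite !cos_plus, Ecos, Esin; reflexivity).
  assert (Esin' : sin (t + PI) = sin (t0 + PI)) by (rewrite !sin_plus, Ecos, Esin; reflexivity).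
  rewrite Ecos', Esin', Ecos, Esin, <- v_antipodal by auto. reflexivity.
Qed.

Lemma F_reflection_symmetric (a th : R) :
  0 <= a < 2 * PI -> 0 < th < PI -> F (a + th) = F (a - th).
Proof.
  intros Ha Hth.
  assert (Hplus : F (a + th) = F (a - (PI - th))).
  { replace (a + th) with (a - (PI - th) + PI) by ring. apply F_addPI. }
  assert (Hminus : F (a - th) = F (a + (PI - th))).
  { replace (a + (PI - th)) with (a - th + PI) by ring. symmetry. apply F_addPI. }
  assert (Hhalf : forall s, 0 < s < PI -> S1_half a (cos (a + s), sin (a + s)))
    by (intros s Hs; exists s; auto).
  assert (Hth' : 0 < PI - th < PI) by lra.
  destruct (v_separable a Ha) as [Hge|Hle].
  - pose proof (Hge _ (Hhalf _ Hth)) as G1. pose proof (Hge _ (Hhalf _ Hth')) as G2.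
    rewrite refl_cos_sin in G1, G2. fold (F (a - th)) (F (a + th)) in G1.
    fold (F (a - (PI - th))) (F (a + (PI - th))) in G2. lra.
  - pose proof (Hle _ (Hhalf _ Hth)) as G1. pose proof (Hle _ (Hhalf _ Hth')) as G2.
    rewrite refl_cos_sin in G1, G2. fold (F (a - th)) (F (a + th)) in G1.
    fold (F (a - (PI - th))) (F (a + (PI - th))) in G2. lra.
Qed.

Lemma F_const_lt (a b : R) :
  0 <= a < 2 * PI -> 0 <= b < 2 * PI -> a < b -> F a = F b.
Proof.
  intros Ha Hb Hab.
  (* [a] and [b] are exchanged by the reflection in the bisecting angle. *)
  pose proof (F_reflection_symmetric ((a + b) / 2) ((b - a) / 2)) as Hsym.
  replace ((a + b) / 2 + (b - a) / 2) with b in Hsym by field.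
  replace ((a + b) / 2 - (b - a) / 2) with a in Hsym by field.
  symmetry. apply Hsym; lra.
Qed.

Lemma F_const (a b : R) : 0 <= a < 2 * PI -> 0 <= b < 2 * PI -> F a = F b.
Proof.
  intros Ha Hb.
  destruct (Rtotal_order a b) as [Hlt|[->|Hgt]].
  - exact (F_const_lt a b Ha Hb Hlt).
  - reflexivity.
  - symmetry. exact (F_const_lt b a Hb Ha Hgt).
Qed.

Lemma separable_antipodal_const (p q : pt) : on_S1 p -> on_S1 q -> v p = v q.
Proof.
  destruct p as [x1 y1], q as [x2 y2]. unfold on_S1; simpl. intros Hp Hq.
  destruct (on_S1_polar _ _ Hp) as [a [Ha [-> ->]]].
  destruct (on_S1_polar _ _ Hq) as [b [Hb [-> ->]]].
  exact (F_const a b Ha Hb).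
Qed.

End SeparableAntipodal.

Theorem corollary2p2 (v : pt -> R) :
  cont_on_S1 v ->
  (forall p, on_S1 p -> 0 < v p) ->
  separable_S1 v ->
  (forall alpha, 0 <= alpha < 2 * PI ->
     v (cos alpha, sin alpha) = v (cos (alpha + PI), sin (alpha + PI))) ->
  forall p q, on_S1 p -> on_S1 q -> v p = v q.
Proof.
  intros _ _ Hsep Hanti. exact (separable_antipodal_const v Hsep Hanti).
Qed.
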